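(* Let $K$ be an $\mathbb N$-valued random variable with $\Pr(K=k)=k^{-5/4}/c$, and let $Y$ be a random variable coupled with $K$ taking the value ''red'' with conditional probability $2^{-K}$ and ''blue'' with conditional probability $1-2^{-K}$. Let $(K_i,Y_i)_{i\in\mathbb N}$ be i.i.d. copies of $(K,Y)$. Then almost every realization $(k_i,y_i)$ stabilizes, i.e. there is $i_0$ such that for all $i>i_0$: (1) the maximal value $k_m$ among $k_1,\ldots,k_i$ is a simple record; (2) $\max\{k_1,\ldots,k_i\}>i$; (3) $y_m=$ ''blue'' for the maximal record-time $m\le i$.
   Context: For a sequence $(k_i)$ of natural numbers, $i$ is a record-time if $k_i>k_j$ for all $j<i$, a non-strict record-time if $k_i\ge k_j$ for all $j<i$, and a record-time $i$ (or record $k_i$) is simple if $k_i<k_j$ for every non-strict record-time $j>i$. *)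

From HB Require Import structures.
From mathcomp Require Import all_boot all_order all_algebra.
From mathcomp Require Import all_classical all_reals all_analysis.
Set Implicit Arguments. Unset Strict Implicit. Unset Printing Implicit Defensive.
Import Order.TTheory GRing.Theory Num.Theory.
Local Open Scope classical_set_scope.
Local Open Scope ring_scope.

(* Deterministic sequences are 0-indexed: position j corresponds to the
   paper's index j+1. *)

Definition record_time (k : nat -> nat) (i : nat) : Prop :=
  forall j, (j < i)%N -> (k j < k i)%N.

Definition nonstrict_record_time (k : nat -> nat) (i : nat) : Prop :=
  forall j, (j < i)%N -> (k j <= k i)%N.

Definition simple_record (k : nat -> nat) (i : nat) : Prop :=
  record_time k i /\
  forall j, (i < j)%N -> nonstrict_record_time k j -> (k i < k j)%N.

(* Colours: true = "red", false = "blue". *)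
Definition stabilizes (k : nat -> nat) (y : nat -> bool) : Prop :=
  exists i0 : nat, forall i : nat, (i0 < i)%N ->
    (exists m : nat,
        [/\ (m < i)%N, record_time k m,
            (forall j, (m < j < i)%N -> ~ record_time k j),
            simple_record k m & y m = false])
    /\ (i < \max_(j < i) k j)%N.

Definition cK (R : realType) : R :=
  limn (fun n : nat => \sum_(1 <= k < n) (k%:R `^ (- (5%:R / 4%:R)) : R)).

Definition pK (R : realType) (k : nat) : R :=
  if k == 0%N then 0 else (k%:R `^ (- (5%:R / 4%:R))) / cK R.

Definition pKY (R : realType) (k : nat) (red : bool) : R :=
  pK R k * (if red then (2%:R ^- k) else 1 - 2%:R ^- k).

(* Write p_v = P(K = v) and q_v = P(K < v).  Since p_v decays like v^(-5/4), doubling the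
   argument costs at most a factor 4, whence the tail estimate 1 - q_v >= v p_(2v) >= v p_v / 4.
   Three patterns can spoil stabilisation at a level v:
   - a tie, the record value v recurring before being exceeded, of probability at most
     sum_(m,e) q_v^m p_v q_v^e p_v = (p_v / (1 - q_v))^2 <= 16 / v^2;
   - a red record of value v, of probability at most p_v 2^-v / (1 - q_v) <= 2^-v;
   - the first 16^n values all staying below 16^(n+1), of probability q^(16^n) with
     1 - q >= (8 c 2^n)^-1, hence at most 8 c 8^-n by Bernoulli's inequality.
   All three are summable, so the patterns above level W have probability O(1/W) and almost
   surely none occurs from some level on.  Without them, for large i the prefix maximum exceeds
   i, and its first occurrence is the last record time, simple (no tie) and blue (no red record). *)

From HB Require Import structures.
From mathcomp Require Import all_boot all_order all_algebra.
From mathcomp Require Import all_classical all_reals all_analysis.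
From mathcomp Require Import ring lra.
Import Order.TTheory GRing.Theory Num.Theory.
Local Open Scope classical_set_scope.
Local Open Scope ring_scope.
Set Implicit Arguments. Unset Strict Implicit. Unset Printing Implicit Defensive.

Lemma geometric_sum_le (R : realFieldType) (q : R) N : 0 <= q -> q < 1 ->
  \sum_(e < N) q ^+ e <= (1 - q)^-1.
Proof.
move=> q0 q1; have q1_gt0 : 0 < 1 - q by rewrite subr_gt0.
have telescope : (1 - q) * \sum_(e < N) q ^+ e = 1 - q ^+ N.
  elim: N => [|N IH]; first by rewrite big_ord0 expr0 mulr0 subrr.
  by rewrite big_ord_recr /= mulrDr IH exprS; ring.
by rewrite -(ler_pM2l q1_gt0) telescope mulfV ?lt0r_neq0 // gerBl exprn_ge0.
Qed.

Lemma bernoulli_mul_le1 (R : realFieldType) (x : R) N : 0 <= x -> x <= 1 ->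
  (1 - x) ^+ N * (1 + N%:R * x) <= 1.
Proof.
move=> x0 x1; elim: N => [|N IH]; first by rewrite expr0 mul0r addr0 mulr1.
apply: le_trans IH; rewrite exprSr -mulrA ler_wpM2l ?exprn_ge0 ?subr_ge0 //.
have N0 : 0 <= (N%:R : R) by [].
rewrite -natr1; have := mulr_ge0 (mulr_ge0 N0 x0) x0; nra.
Qed.

Lemma sum_inv_sq_tail_le (R : realFieldType) W N : (0 < W)%N ->
  \sum_(e < N) ((W.+1 + e)%:R ^+ 2 : R)^-1 <= W%:R^-1.
Proof.
move=> W0.
suff : \sum_(e < N) ((W.+1 + e)%:R ^+ 2 : R)^-1 <= W%:R^-1 - (W + N)%:R^-1.
  by move/le_trans; apply; rewrite gerBl invr_ge0 ler0n.
elim: N => [|N IH]; first by rewrite big_ord0 addn0 subrr.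
rewrite big_ord_recr /= addSn addnS -!natr1.
have a0 : 0 < ((W + N)%:R : R) by rewrite ltr0n addn_gt0 W0.
set a := ((W + N)%:R : R) in a0 IH *; clearbody a.
suff : ((a + 1) ^+ 2)^-1 <= a^-1 - (a + 1)^-1 by lra.
have -> : a^-1 - (a + 1)^-1 = (a * (a + 1))^-1.
  field; rewrite ?lt0r_neq0 ?addr_gt0 //.
rewrite lef_pV2 ?posrE ?exprn_gt0 ?mulr_gt0 ?addr_gt0 //.
by rewrite expr2 ler_pM2r ?addr_gt0 //; lra.
Qed.

Lemma invn_exp_le (R : realFieldType) m W : (1 < m)%N -> (0 < W)%N ->
  ((m%:R : R)^-1) ^+ W <= W%:R^-1.
Proof.
move=> m1 W0; have m0 : (0 < m)%N by apply: leq_trans m1.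
rewrite exprVn lef_pV2 ?posrE ?exprn_gt0 ?ltr0n //.
by rewrite -natrX ler_nat ltnW // ltn_expl.
Qed.

Section CountableUnions.
Context d (T : measurableType d) (R : realType) (mu : {measure set T -> \bar R}).
Implicit Types A : nat -> set T.

Lemma measure_bigcup_le A (b : nat -> R) (B : R) :
  (forall n, measurable (A n)) -> (forall n, (mu (A n) <= (b n)%:E)%E) ->
  (forall N, \sum_(n < N) b n <= B) -> (mu (\bigcup_n A n) <= B%:E)%E.
Proof.
move=> mA hA hB.
have /le_trans -> // := measure_sigma_subadditive mu mA
  (bigcup_measurable (fun n _ => mA n)) (@subset_refl _ (\bigcup_n A n)).
apply: lime_le; first by apply: is_cvg_nneseries => n _ _; exact: measure_ge0.
near=> N; apply: (@le_trans _ _ (\sum_(0 <= n < N) (b n)%:E)%E).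
  by apply: lee_sum => n _; exact: hA.
by rewrite sumEFin lee_fin big_mkord hB.
Unshelve. all: by end_near. Qed.

Lemma measure_bigcup_geometric A (q c : R) :
  (forall n, measurable (A n)) -> 0 <= q -> q < 1 -> 0 <= c ->
  (forall n, (mu (A n) <= (q ^+ n * c)%:E)%E) -> (mu (\bigcup_n A n) <= (c / (1 - q))%:E)%E.
Proof.
move=> mA q0 q1 c0 hA; apply: measure_bigcup_le mA hA _ => N.
by rewrite -mulr_suml mulrC ler_wpM2l ?geometric_sum_le.
Qed.

Lemma measure_bigcap_eq0 A (C : R) : (forall n, measurable (A n)) ->
  (forall n, (mu (A n) <= (C / n.+1%:R)%:E)%E) -> mu (\bigcap_n A n) = 0%E.
Proof.
move=> mA hA; apply/eqP; rewrite eq_le measure_ge0 andbT.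
have C0 : 0 <= C.
  by have := le_trans (measure_ge0 mu (A 0%N)) (hA 0%N); rewrite lee_fin divr1.
apply/lee_addgt0Pr => e e0; rewrite add0e.
pose n := Num.Def.archi_bound (C / e).
have le_An : (mu (\bigcap_n A n) <= mu (A n))%E.
  apply: le_measure; rewrite ?inE; [exact: bigcapT_measurable | exact: mA |].
  by move=> w; apply.
apply: le_trans le_An (le_trans (hA n) _).
rewrite lee_fin ler_pdivrMr ?ltr0n // mulrC.
have := archi_boundP (divr_ge0 C0 (ltW e0)); rewrite -/n ltr_pdivrMr // => /ltW.
by move/le_trans; apply; apply: ler_wpM2r; rewrite ?ler_nat // ltW.
Qed.

End CountableUnions.

Lemma prod_two_marks (R : pzSemiRingType) m e (a b : R) :
  \prod_(i < (m + e).+2) (if ((i : nat) == m) || ((i : nat) == (m + e).+1) then a else b)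
  = b ^+ m * a * b ^+ e * a.
Proof.
rewrite big_ord_recr /= eqxx orbT; congr (_ * _).
under eq_bigr => i _ do rewrite (ltn_eqF (ltn_ord i)) orbF.
have me : (m <= (m + e).+1)%N by rewrite ltnW // ltnS leq_addr.
rewrite -(big_mkord xpredT (fun i => if i == m then a else b)).
rewrite (@big_cat_nat _ _ _ m 0 (m + e).+1 _ _ (leq0n m) me).
rewrite [\prod_(m <= i < _) _]big_ltn ?ltnS ?leq_addr //= eqxx.
rewrite (eq_big_nat _ _ (F2 := fun _ => b)) => [|i /andP[_ im]]; last by rewrite ltn_eqF.
rewrite [X in _ * (_ * X)](eq_big_nat _ _ (F2 := fun _ => b)) => [|i /andP[mi _]]; last first.
  by rewrite gtn_eqF.
by rewrite !prodr_const_nat subn0 subSS addKn mulrA.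
Qed.

Lemma prod_last_mark (R : pzSemiRingType) m (a b : R) :
  \prod_(i < m.+1) (if (i : nat) == m then a else b) = b ^+ m * a.
Proof.
rewrite big_ord_recr /= eqxx (eq_bigr (fun _ => b)) ?prodr_const ?card_ord // => i _.
by rewrite (ltn_eqF (ltn_ord i)).
Qed.

Definition decay (R : realType) (x : R) : R := x `^ (- (5%:R / 4%:R)).

Section Decay.
Variable R : realType.
Implicit Types x y : R.

Lemma decay_gt0 x : 0 < x -> 0 < decay x.
Proof. by move=> x0; rewrite /decay powR_gt0. Qed.

Lemma le_decay x y : 0 < x -> x <= y -> decay y <= decay x.
Proof.
move=> x0 xy; have y0 : 0 < y by apply: lt_le_trans xy.
rewrite /decay !powRN lef_pV2 ?posrE ?powR_gt0 //.
by apply: ge0_ler_powR => //; rewrite ?nnegrE ltW.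
Qed.

Lemma decayM x y : 0 <= x -> 0 <= y -> decay (x * y) = decay x * decay y.
Proof. by move=> x0 y0; rewrite /decay powRM. Qed.

Lemma decayX x n : 0 <= x -> decay (x ^+ n) = decay x ^+ n.
Proof.
move=> x0; elim: n => [|n IH]; first by rewrite !expr0 /decay powR1.
by rewrite !exprS decayM ?exprn_ge0 // IH.
Qed.

Lemma decay2_exp4 : decay (2 : R) ^+ 4 = 32^-1.
Proof.
rewrite /decay -powR_mulrn ?powR_ge0 // -powRrM.
have -> : - (5%:R / 4%:R) * 4%:R = - (5%:R : R) by rewrite mulNr divfK // pnatr_eq0.
by rewrite powRN powR_mulrn // -natrX.
Qed.

Lemma decay2_ge : 4^-1 <= decay (2 : R).
Proof.
have d0 : 0 <= decay (2 : R) by rewrite ltW // decay_gt0.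
rewrite -(ler_pXn2r (n := 4)) ?nnegrE ?invr_ge0 // decay2_exp4.
by rewrite exprVn lef_pV2 ?posrE // -natrX ler_nat.
Qed.

Lemma decay_exp16 n : decay ((16 ^ n)%:R : R) = 32^-1 ^+ n.
Proof.
rewrite natrX (_ : 16%:R = 2 ^+ 4); last by rewrite -natrX.
by rewrite !decayX ?exprn_ge0 // decay2_exp4.
Qed.

End Decay.

Section Records.
Local Open Scope nat_scope.
Variables (k : nat -> nat) (y : nat -> bool).

(* The second occurrence is placed at [m + e + 1], so that summing over [m] and [e] gives
   a product of two geometric series. *)
Definition record_tie (v m e : nat) : Prop :=
  [/\ k m = v, k (m + e).+1 = v & forall l, l < (m + e).+1 -> l != m -> k l < v].

Definition red_record (v m : nat) : Prop :=
  [/\ k m = v, y m & forall l, l < m -> k l < v].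

Definition low_prefix (n : nat) : Prop := forall l, l < 16 ^ n -> k l < 16 ^ n.+1.

Lemma simple_record_of_no_tie m :
  record_time k m -> (forall e, ~ record_tie (k m) m e) -> simple_record k m.
Proof.
move=> rec_m no_tie; split=> // j mj nsrec_j; rewrite ltnNge; apply/negP => kjm.
have kj : k j = k m by apply/eqP; rewrite eqn_leq kjm nsrec_j.
have exj : exists j', (m < j') && (k j' == k m) by exists j; rewrite mj kj eqxx.
case: (ex_minnP exj) => j' /andP[mj' /eqP kj'] min_j'.
have j'j : j' <= j by apply: min_j'; rewrite mj kj eqxx.
apply: (no_tie (j' - m).-1); rewrite /record_tie.
have -> : (m + (j' - m).-1).+1 = j' by rewrite -addnS prednK ?subn_gt0 // subnKC // ltnW.
split=> // l lj' lm; case: (ltngtP l m) => [|ml|lm']; first exact: rec_m.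
- rewrite ltn_neqAle -kj nsrec_j ?(leq_trans lj') // andbT.
  apply/eqP => kl; have := min_j' l; rewrite ml kl kj eqxx => /(_ isT).
  by rewrite leqNgt lj'.
- by rewrite lm' eqxx in lm.
Qed.

Lemma record_time_argmax i : 0 < i ->
  exists2 m, m < i & record_time k m /\ k m = \max_(j < i) k j.
Proof.
move=> i0; set M := \max_(j < i) k j.
have [j0 Mj0] := @bigop.eq_bigmax _ (fun j : 'I_i => k j) (ltac:(by rewrite card_ord)).
have exM : exists m, (m < i) && (k m == M) by exists j0; rewrite ltn_ord -Mj0 eqxx.
case: (ex_minnP exM) => m /andP[mi /eqP kmM] min_m; exists m => //; split=> // l lm.
have li : l < i by apply: ltn_trans mi.
rewrite kmM ltn_neqAle (@leq_bigmax _ (fun j : 'I_i => k j) (Ordinal li)) andbT.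
by apply/eqP => klM; have := min_m l; rewrite li klM eqxx => /(_ isT); rewrite leqNgt lm.
Qed.

Lemma prefix_max_gt V i : (forall n, V <= n -> ~ low_prefix n) ->
  16 ^ V < i -> i < \max_(j < i) k j.
Proof.
move=> no_low Vi; rewrite ltnNge; apply/negP => maxi.
have i0 : 0 < i by apply: leq_ltn_trans Vi.
have /andP[lo hi] := trunc_log_bounds (erefl : 1 < 16) i0.
apply: (no_low (trunc_log 16 i)); first exact/trunc_log_max/ltnW.
move=> l li; apply: leq_ltn_trans hi; apply: leq_trans maxi.
exact: (@leq_bigmax _ (fun j : 'I_i => k j) (Ordinal (leq_trans li lo))).
Qed.

Lemma stabilizes_of_no_pattern V :
  (forall v m e, V <= v -> ~ record_tie v m e) ->
  (forall v m, V <= v -> ~ red_record v m) ->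
  (forall n, V <= n -> ~ low_prefix n) -> stabilizes k y.
Proof.
move=> no_tie no_red no_low; exists (16 ^ V) => i Vi.
have i_max := prefix_max_gt no_low Vi.
have [m mi [rec_m km]] := record_time_argmax (leq_ltn_trans (leq0n _) Vi).
have le_km l : l < i -> k l <= k m.
  by move=> li; rewrite km (@leq_bigmax _ (fun j : 'I_i => k j) (Ordinal li)).
have V_km : V <= k m.
  by rewrite km ltnW // (ltn_trans (ltn_trans (@ltn_expl 16 V erefl) Vi) i_max).
split=> //; exists m; split=> //.
- by move=> j /andP[mj ji] rec_j; have := rec_j m mj; rewrite ltnNge le_km.
- by apply: simple_record_of_no_tie => // e; exact: no_tie.
- by apply/negP => ym; apply: (no_red (k m) m V_km).
Qed.

End Records.

Definition qK (R : realType) (v : nat) : R := \sum_(k < v) pK R k.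

Section Marginals.
Variable R : realType.

Lemma pK_decay k : (0 < k)%N -> pK R k = decay (k%:R : R) / cK R.
Proof. by rewrite /pK /decay; case: k. Qed.

Lemma sum_pKY_if (c : bool) k :
  \sum_(b : bool | c) pKY R k b = if c then pK R k else 0.
Proof. by case: c; [rewrite big_bool /pKY /=; ring | rewrite big_pred0]. Qed.

Lemma sum_pKY_red (c : bool) k :
  \sum_(b : bool | c && b) pKY R k b = if c then pKY R k true else 0.
Proof. by case: c; [rewrite (big_pred1 true) // => -[] | rewrite big_pred0]. Qed.

Lemma sum_marginal_eq v :
  \sum_(k < v.+1) \sum_(b : bool | (k : nat) == v) pKY R k b = pK R v.
Proof.
rewrite big_ord_recr /= eqxx sum_pKY_if big1 ?add0r // => k _.
by rewrite (ltn_eqF (ltn_ord k)) sum_pKY_if.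
Qed.

Lemma sum_marginal_red v :
  \sum_(k < v.+1) \sum_(b : bool | ((k : nat) == v) && b) pKY R k b = pKY R v true.
Proof.
rewrite big_ord_recr /= eqxx sum_pKY_red big1 ?add0r // => k _.
by rewrite (ltn_eqF (ltn_ord k)) sum_pKY_red.
Qed.

Lemma sum_marginal_lt v :
  \sum_(k < v.+1) \sum_(b : bool | (k < v)%N) pKY R k b = qK R v.
Proof.
rewrite big_ord_recr /= ltnn sum_pKY_if addr0; apply: eq_bigr => k _.
by rewrite ltn_ord sum_pKY_if.
Qed.

End Marginals.

Section IIDSequence.
Variables (R : realType) (d : measure_display) (T : measurableType d)
  (P : probability T R) (K : nat -> T -> nat) (Y : nat -> T -> bool).
Hypothesis K_Y_measurable : forall (i k : nat) (b : bool),
  measurable [set w | K i w = k /\ Y i w = b].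
Hypothesis K_Y_iid : forall (n : nat) (k : nat -> nat) (b : nat -> bool),
  P [set w | forall i, (i < n)%N -> K i w = k i /\ Y i w = b i]
  = (\prod_(i < n) pKY R (k i) (b i))%:E.

Definition cylinder n (k : nat -> nat) (b : nat -> bool) : set T :=
  [set w | forall i, (i < n)%N -> K i w = k i /\ Y i w = b i].

Lemma cylinder_measurable n k b : measurable (cylinder n k b).
Proof.
have -> : cylinder n k b =
    \bigcap_(i in [set i | (i < n)%N]) [set w | K i w = k i /\ Y i w = b i].
  by apply/seteqP; split=> w /= h i; exact: h.
by apply: bigcap_measurableType => i _; exact: K_Y_measurable.
Qed.

Lemma cylinder_prob n k b : P (cylinder n k b) = (\prod_(i < n) pKY R (k i) (b i))%:E.
Proof. exact: K_Y_iid. Qed.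

Definition prefix_event n L (Q : nat -> nat -> bool -> bool) : set T :=
  [set w | forall i, (i < n)%N -> (K i w <= L)%N /\ Q i (K i w) (Y i w)].

Section Finfun.
Variables (n L : nat).
Implicit Type f : {ffun 'I_n -> 'I_L.+1 * bool}.

Definition ffst f (i : nat) : nat := oapp (fun j => val (f j).1) 0%N (insub i).
Definition fsnd f (i : nat) : bool := oapp (fun j => (f j).2) false (insub i).

Lemma ffstE f (i : 'I_n) : ffst f i = (f i).1.
Proof. by rewrite /ffst valK. Qed.

Lemma fsndE f (i : 'I_n) : fsnd f i = (f i).2.
Proof. by rewrite /fsnd valK. Qed.

Lemma prefix_eventE Q : prefix_event n L Q =
  \bigcup_(f in [set f : {ffun 'I_n -> 'I_L.+1 * bool} |
                 f \in family (fun i : 'I_n => [pred x : 'I_L.+1 * bool | Q i x.1 x.2])])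
    cylinder n (ffst f) (fsnd f).
Proof.
apply/seteqP; split=> w /=.
  move=> hw; exists [ffun i : 'I_n => (inord (K i w) : 'I_L.+1, Y i w)].
    apply/familyP => i; rewrite ffunE inE /=.
    by have [KL hQ] := hw i (ltn_ord i); rewrite inordK.
  move=> i ni; have [KL _] := hw i ni.
  by rewrite -[i]/(val (Ordinal ni)) ffstE fsndE ffunE /= inordK.
move=> [f /familyP hf hw] i ni; have := hw i ni; have := hf (Ordinal ni).
by rewrite -[i]/(val (Ordinal ni)) ffstE fsndE inE => + [-> ->]; rewrite -ltnS.
Qed.

Lemma cylinder_disjoint f g : cylinder n (ffst f) (fsnd f) `&` cylinder n (ffst g) (fsnd g)
  !=set0 -> f = g.
Proof.
move=> [w [hf hg]]; apply/ffunP => i.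
have [f1 f2] := hf i (ltn_ord i); have [g1 g2] := hg i (ltn_ord i).
rewrite !ffstE !fsndE in f1 f2 g1 g2.
rewrite [f i]surjective_pairing [g i]surjective_pairing; congr (_, _).
  by apply/val_inj; rewrite /= -f1 -g1.
by rewrite -f2 -g2.
Qed.

End Finfun.

Lemma prefix_event_measurable n L Q : measurable (prefix_event n L Q).
Proof.
rewrite prefix_eventE; apply: fin_bigcup_measurable; first exact: finite_finset.
by move=> f _; exact: cylinder_measurable.
Qed.

Lemma prefix_event_prob n L Q : P (prefix_event n L Q) =
  (\prod_(i < n) \sum_(k < L.+1) \sum_(b : bool | Q i k b) pKY R k b)%:E.
Proof.
rewrite prefix_eventE measure_fin_bigcup; first last.
- by move=> f _; exact: cylinder_measurable.
- by move=> f g _ _; exact: cylinder_disjoint.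
- exact: finite_finset.
rewrite (fsbigE (enum (family (fun i : 'I_n => [pred x : 'I_L.+1 * bool | Q i x.1 x.2])))).
- rewrite big_enum_cond /=.
  under eq_bigr do rewrite cylinder_prob.
  rewrite sumEFin; congr (_%:E).
  under [RHS]eq_bigr do rewrite pair_big_dep /=.
  rewrite bigA_distr_big_dep; apply: eq_big => [f|f _]; first by rewrite mem_setE andbb.
  by apply: eq_bigr => i _; rewrite ffstE fsndE.
- exact: enum_uniq.
- by move=> f /=; rewrite mem_enum.
- by move=> f /= hf; rewrite mem_enum hf.
Qed.

(* Positivity and normalisation of [pK] are read off from [P] being a probability. *)
Lemma pKY_ge0 k b : 0 <= pKY R k b.
Proof.
have : (0 <= P (cylinder 1 (fun=> k) (fun=> b)))%E by exact: measure_ge0.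
by rewrite cylinder_prob big_ord1 lee_fin.
Qed.

Lemma pK_ge0 k : 0 <= pK R k.
Proof. by rewrite -(sum_pKY_if R true) big_bool addr_ge0 ?pKY_ge0. Qed.

Lemma qK_ge0 v : 0 <= qK R v.
Proof. by apply: sumr_ge0 => k _; exact: pK_ge0. Qed.

Lemma prob_first_lt v : P (prefix_event 1 v (fun _ k _ => (k < v)%N)) = (qK R v)%:E.
Proof. by rewrite prefix_event_prob big_ord1 sum_marginal_lt. Qed.

Lemma qK_le1 v : qK R v <= 1.
Proof.
by rewrite -lee_fin -prob_first_lt probability_le1 //; exact: prefix_event_measurable.
Qed.

Lemma cK_gt0 : 0 < cK R.
Proof.
have : 0 <= pK R 1 := pK_ge0 1.
rewrite /pK /= powR1 mul1r invr_ge0 le_eqVlt => /orP[/eqP c0|//].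
have qK0 v : qK R v = 0.
  by apply: big1 => k _; rewrite /pK -c0 invr0 mulr0 if_same.
have : (P setT <= 0%:E)%E.
  have -> : setT = \bigcup_v prefix_event 1 v (fun _ k _ => (k < v)%N).
    apply/seteqP; split=> // w _; exists (K 0%N w).+1 => // i.
    by rewrite ltnS leqn0 => /eqP ->; split.
  apply: (measure_bigcup_le (b := fun=> 0)) => [v|v|N].
  - exact: prefix_event_measurable.
  - by rewrite -[leLHS]/(P _) prob_first_lt qK0.
  - by rewrite big1.
by rewrite probability_setT lee_fin ler10.
Qed.

Lemma pK_le_tail v : pK R v <= 1 - qK R v.
Proof. by have := qK_le1 v.+1; rewrite /qK big_ord_recr /=; lra. Qed.

Lemma pK_gt0 k : (0 < k)%N -> 0 < pK R k.
Proof. by move=> k0; rewrite pK_decay // divr_gt0 ?cK_gt0 ?decay_gt0 ?ltr0n. Qed.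

Lemma le_pK j k : (0 < j <= k)%N -> pK R k <= pK R j.
Proof.
move=> /andP[j0 jk]; rewrite !pK_decay ?(leq_trans j0) //.
by rewrite ler_pM2r ?invr_gt0 ?cK_gt0 // le_decay ?ltr0n ?ler_nat.
Qed.

Lemma pK_double v : (0 < v)%N -> pK R v <= 4 * pK R (v + v).
Proof.
move=> v0; rewrite !pK_decay ?addn_gt0 ?v0 //.
rewrite (_ : (v + v)%:R = 2 * v%:R); last by rewrite natrD; ring.
rewrite decayM ?ler0n //.
have d2 : 1 <= 4 * decay (2 : R) by have := decay2_ge R; lra.
rewrite (_ : 4 * _ = 4 * decay 2 * (decay v%:R / cK R)); last by ring.
by rewrite -[X in X <= _]mul1r ler_wpM2r // ltW // divr_gt0 ?cK_gt0 ?decay_gt0 ?ltr0n.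
Qed.

Lemma tail_lower_bound v : (0 < v)%N -> v%:R * pK R v <= 4 * (1 - qK R v).
Proof.
move=> v0; have := qK_le1 (v + v).
rewrite /qK -!(big_mkord xpredT (pK R)).
rewrite (@big_cat_nat _ _ _ v 0 (v + v) _ _ (leq0n v) (leq_addr v v)) /=.
have tail : v%:R * pK R (v + v) <= \sum_(v <= k < v + v) pK R k.
  have -> : v%:R * pK R (v + v) = \sum_(v <= k < v + v) pK R (v + v).
    by rewrite sumr_const_nat addnK mulr_natl.
  apply: ler_sum_nat => k /andP[vk kvv].
  by apply: le_pK; rewrite (leq_trans v0 vk) ltnW.
have := pK_double v0; have := ler0n R v; nra.
Qed.

Definition tie_event v m e : set T := [set w | record_tie (K^~ w) v m e].
Definition red_event v m : set T := [set w | red_record (K^~ w) (Y^~ w) v m].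
Definition low_event n : set T := [set w | low_prefix (K^~ w) n].

Lemma tie_eventE v m e : tie_event v m e = prefix_event (m + e).+2 v
  (fun i k _ => if (i == m) || (i == (m + e).+1) then k == v else (k < v)%N).
Proof.
apply/seteqP; split=> w /=.
  move=> [km kme lt_v] i ie; case: eqP => [->|im] /=; first by rewrite km leqnn eqxx.
  case: eqP => [->|ime]; first by rewrite kme leqnn eqxx.
  have il : (i < (m + e).+1)%N by rewrite ltn_neqAle -ltnS ie andbT; apply/eqP.
  by have kv := lt_v i il (introN eqP im); rewrite kv ltnW.
move=> h; have me : (m < (m + e).+2)%N by rewrite ltnS -addnS leq_addr.
split.
- by have [_] := h m me; rewrite eqxx => /eqP.
- by have [_] := h (m + e).+1 (ltnSn _); rewrite eqxx orbT => /eqP.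
- move=> l lme lm; have [_] := h l (ltnW (leq_trans lme (ltnSn _))).
  by rewrite (negbTE lm) (ltn_eqF lme).
Qed.

Lemma red_eventE v m : red_event v m =
  prefix_event m.+1 v (fun i k b => if i == m then (k == v) && b else (k < v)%N).
Proof.
apply/seteqP; split=> w /=.
  move=> [km ym lt_v] i im; case: eqP => [->|ne_im]; first by rewrite km ym leqnn eqxx.
  have li : (i < m)%N by rewrite ltn_neqAle -ltnS im andbT; apply/eqP.
  by rewrite lt_v // ltnW // lt_v.
move=> h; have [_] := h m (ltnSn _); rewrite eqxx => /andP[/eqP km ym].
by split=> // l lm; have [_] := h l (ltnW lm); rewrite (ltn_eqF lm).
Qed.

Lemma low_eventE n : low_event n =
  prefix_event (16 ^ n) (16 ^ n.+1) (fun _ k _ => (k < 16 ^ n.+1)%N).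
Proof.
by apply/seteqP; split=> w /= h i ni; [rewrite ltnW h | have [] := h i ni].
Qed.

Lemma tie_event_measurable v m e : measurable (tie_event v m e).
Proof. by rewrite tie_eventE; exact: prefix_event_measurable. Qed.

Lemma red_event_measurable v m : measurable (red_event v m).
Proof. by rewrite red_eventE; exact: prefix_event_measurable. Qed.

Lemma low_event_measurable n : measurable (low_event n).
Proof. by rewrite low_eventE; exact: prefix_event_measurable. Qed.

Lemma tie_event_prob v m e :
  P (tie_event v m e) = (qK R v ^+ m * pK R v * qK R v ^+ e * pK R v)%:E.
Proof.
rewrite tie_eventE prefix_event_prob -prod_two_marks; congr (_%:E).
by apply: eq_bigr => i _; case: (_ || _); rewrite /= ?sum_marginal_eq ?sum_marginal_lt.
Qed.

Lemma red_event_prob v m : P (red_event v m) = (qK R v ^+ m * pKY R v true)%:E.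
Proof.
rewrite red_eventE prefix_event_prob -prod_last_mark; congr (_%:E).
by apply: eq_bigr => i _; case: (_ == _); rewrite /= ?sum_marginal_red ?sum_marginal_lt.
Qed.

Lemma low_event_prob n : P (low_event n) = (qK R (16 ^ n.+1) ^+ (16 ^ n))%:E.
Proof.
by rewrite low_eventE prefix_event_prob sum_marginal_lt prodr_const card_ord.
Qed.

Lemma tie_bound v : (0 < v)%N ->
  (P (\bigcup_m \bigcup_e tie_event v m e) <= (16 / v%:R ^+ 2)%:E)%E.
Proof.
move=> v0; set p := pK R v; set q := qK R v.
have p0 : 0 < p := pK_gt0 v0.
have q0 : 0 <= q := qK_ge0 v.
have pq : p <= 1 - q := pK_le_tail v.
have q1 : q < 1 by lra.
have vp : v%:R * p <= 4 * (1 - q) := tail_lower_bound v0.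
apply: le_trans (measure_bigcup_geometric (c := p * p / (1 - q)) _ q0 q1 _ _) _.
- by move=> m; apply: bigcupT_measurable => e; exact: tie_event_measurable.
- by rewrite divr_ge0 ?mulr_ge0 ?subr_ge0 // ltW.
- move=> m; apply: le_trans (measure_bigcup_geometric (c := q ^+ m * p * p) _ q0 q1 _ _) _.
  + exact: tie_event_measurable.
  + by rewrite !mulr_ge0 ?exprn_ge0 // ltW.
  + move=> e; rewrite -[leLHS]/(P _) tie_event_prob -/p -/q lee_fin le_eqVlt.
    by apply/orP; left; apply/eqP; ring.
  + by rewrite lee_fin le_eqVlt; apply/orP; left; apply/eqP; ring.
have pqv : p / (1 - q) <= 4 / v%:R.
  by rewrite ler_pdivrMr ?subr_gt0 // mulrAC ler_pdivlMr ?ltr0n // mulrC.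
have -> : 16 / v%:R ^+ 2 = 4 / v%:R * (4 / v%:R) :> R.
  by field; rewrite pnatr_eq0 -lt0n.
have -> : p * p / (1 - q) / (1 - q) = p / (1 - q) * (p / (1 - q)) by ring.
by rewrite lee_fin ler_pM // divr_ge0 ?subr_ge0 // ltW.
Qed.

Lemma red_bound v : (0 < v)%N ->
  (P (\bigcup_m red_event v m) <= (2%:R ^- v)%:E)%E.
Proof.
move=> v0; set p := pK R v; set q := qK R v.
have p0 : 0 < p := pK_gt0 v0.
have q0 : 0 <= q := qK_ge0 v.
have pq : p <= 1 - q := pK_le_tail v.
have q1 : q < 1 by lra.
apply: le_trans (measure_bigcup_geometric (c := pKY R v true) _ q0 q1 _ _) _.
- exact: red_event_measurable.
- exact: pKY_ge0.
- by move=> m; rewrite -[leLHS]/(P _) red_event_prob.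
by rewrite lee_fin /pKY ler_pdivrMr ?subr_gt0 // mulrC ler_wpM2l ?invr_ge0 ?exprn_ge0.
Qed.

Lemma low_bound n : (P (low_event n) <= (8 * cK R * 8^-1 ^+ n)%:E)%E.
Proof.
rewrite low_event_prob lee_fin.
set u := (16 ^ n.+1)%N; set x := 1 - qK R u; set s : R := 8 ^+ n; set t : R := 2 ^+ n.
have c0 := cK_gt0; have s0 : 0 < s by rewrite exprn_gt0.
have t0 : 0 < t by rewrite exprn_gt0.
have u0 : (0 < u)%N by rewrite expn_gt0.
have x0 : 0 <= x by rewrite subr_ge0 qK_le1.
have x1 : x <= 1 by rewrite gerBl qK_ge0.
have hx : (8 * cK R * t)^-1 <= x.
  have := tail_lower_bound u0; rewrite pK_decay // decay_exp16 natrX mulrA -exprMn.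
  rewrite (_ : 16%:R * 32^-1 = 2^-1 :> R); last by field.
  rewrite exprVn exprS -/t -/x (_ : _ / cK R = 4 * (8 * cK R * t)^-1); first lra.
  by field; rewrite !lt0r_neq0.
have Nx : s / (8 * cK R) <= (16 ^ n)%:R * x.
  rewrite natrX (_ : 16%:R = 8 * 2 :> R) ?exprMn -/s -/t; last by rewrite -natrM.
  apply: le_trans (ler_wpM2l (mulr_ge0 (ltW s0) (ltW t0)) hx).
  by rewrite le_eqVlt; apply/orP; left; apply/eqP; field; rewrite !lt0r_neq0.
have := bernoulli_mul_le1 (16 ^ n) x0 x1; rewrite (_ : 1 - x = qK R u); last first.
  by rewrite /x; ring.
set A := qK R u ^+ _ => AN; have A0 : 0 <= A by rewrite exprn_ge0 // qK_ge0.
have As : A * (s / (8 * cK R)) <= 1.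
  by apply: le_trans AN; apply: ler_wpM2l => //; lra.
rewrite mulrA ler_pdivrMr ?mulr_gt0 // mul1r in As.
by rewrite exprVn -/s ler_pdivlMr.
Qed.

Definition tie_tail W := \bigcup_e \bigcup_m \bigcup_e' tie_event (W.+1 + e) m e'.
Definition red_tail W := \bigcup_e \bigcup_m red_event (W.+1 + e) m.
Definition low_tail W := \bigcup_e low_event (W.+1 + e).
Definition bad_tail W := tie_tail W `|` red_tail W `|` low_tail W.

Lemma tie_tail_measurable W : measurable (tie_tail W).
Proof. by do 3 apply: bigcupT_measurable => ?; exact: tie_event_measurable. Qed.

Lemma red_tail_measurable W : measurable (red_tail W).
Proof. by do 2 apply: bigcupT_measurable => ?; exact: red_event_measurable. Qed.

Lemma low_tail_measurable W : measurable (low_tail W).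
Proof. by apply: bigcupT_measurable => ?; exact: low_event_measurable. Qed.

Lemma bad_tail_measurable W : measurable (bad_tail W).
Proof.
apply: measurableU; last exact: low_tail_measurable.
by apply: measurableU; [exact: tie_tail_measurable | exact: red_tail_measurable].
Qed.

Lemma tie_tail_bound W : (0 < W)%N -> (P (tie_tail W) <= (16 / W%:R)%:E)%E.
Proof.
move=> W0; apply: (measure_bigcup_le (b := fun e => 16 / (W.+1 + e)%:R ^+ 2)) => [e|e|N].
- by do 2 apply: bigcupT_measurable => ?; exact: tie_event_measurable.
- exact: tie_bound.
- by rewrite -mulr_sumr ler_wpM2l // sum_inv_sq_tail_le.
Qed.

Lemma red_tail_bound W : (0 < W)%N -> (P (red_tail W) <= (W%:R^-1)%:E)%E.
Proof.
move=> W0; have h2 : (2^-1 : R) < 1 by rewrite invf_lt1 // ltr1n.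
apply: le_trans (measure_bigcup_geometric (c := 2^-1 ^+ W.+1) _ _ h2 _ _) _.
- by move=> e; apply: bigcupT_measurable => m; exact: red_event_measurable.
- by rewrite invr_ge0.
- by rewrite exprn_ge0 // invr_ge0.
- by move=> e; apply: le_trans (red_bound _) _; rewrite // -exprVn exprD mulrC.
rewrite lee_fin (_ : _ / _ = 2^-1 ^+ W); last by rewrite exprS; field.
exact: invn_exp_le.
Qed.

Lemma low_tail_bound W : (0 < W)%N -> (P (low_tail W) <= (8 * cK R / W%:R)%:E)%E.
Proof.
move=> W0; have h8 : (8^-1 : R) < 1 by rewrite invf_lt1 // ltr1n.
have c0 := cK_gt0.
apply: le_trans (measure_bigcup_geometric (c := 8 * cK R * 8^-1 ^+ W.+1) _ _ h8 _ _) _.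
- by move=> e; exact: low_event_measurable.
- by rewrite invr_ge0.
- by rewrite !mulr_ge0 ?exprn_ge0 ?invr_ge0 // ltW.
- move=> e; apply: le_trans (low_bound _) _.
  by rewrite lee_fin le_eqVlt exprD; apply/orP; left; apply/eqP; ring.
rewrite lee_fin (_ : _ / _ = 8 * cK R * 8^-1 ^+ W * 7^-1); last by rewrite exprS; field.
rewrite -mulrA; apply: ler_wpM2l; first by rewrite mulr_ge0 // ltW.
apply: le_trans (invn_exp_le R (erefl : (1 < 8)%N) W0).
by rewrite ler_piMr ?exprn_ge0 ?invr_ge0 // invf_le1 // ler1n.
Qed.

Lemma bad_tail_bound W : (0 < W)%N ->
  (P (bad_tail W) <= ((17 + 8 * cK R) / W%:R)%:E)%E.
Proof.
move=> W0.
apply: le_trans (measureU2 P (measurableU _ _ (tie_tail_measurable W)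
  (red_tail_measurable W)) (low_tail_measurable W)) _.
apply: le_trans (leeD (measureU2 P (tie_tail_measurable W) (red_tail_measurable W))
  (lexx _)) _.
apply: le_trans (leeD (leeD (tie_tail_bound W0) (red_tail_bound W0)) (low_tail_bound W0)) _.
rewrite -!EFinD lee_fin le_eqVlt; apply/orP; left; apply/eqP.
by field; rewrite pnatr_eq0 -lt0n.
Qed.

Lemma stabilizes_outside_bad_tail W w :
  ~ bad_tail W.+1 w -> stabilizes (K^~ w) (Y^~ w).
Proof.
move=> not_bad; apply: (@stabilizes_of_no_pattern _ _ W.+2) => [v m e|v m|v] Vv hw;
  apply: not_bad.
- by left; left; exists (v - W.+2)%N => //; rewrite subnKC //; exists m => //; exists e.
- by left; right; exists (v - W.+2)%N => //; rewrite subnKC //; exists m.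
- by right; exists (v - W.+2)%N => //; rewrite subnKC.
Qed.

End IIDSequence.

Unset Implicit Arguments.

Theorem mainTheorem6 (R : realType) (d : measure_display) (T : measurableType d)
  (P : probability T R) (K : nat -> T -> nat) (Y : nat -> T -> bool)
  (hmeas : forall (i k : nat) (b : bool),
      measurable [set w | K i w = k /\ Y i w = b])
  (hiid : forall (n : nat) (k : nat -> nat) (b : nat -> bool),
      P [set w | forall i, (i < n)%N -> K i w = k i /\ Y i w = b i]
      = (\prod_(i < n) pKY R (k i) (b i))%:E) :
  {ae P, forall w, stabilizes (fun i => K i w) (fun i => Y i w)}.
Proof.
have mbad W : measurable (bad_tail K Y W) := bad_tail_measurable hmeas W.
exists (\bigcap_W bad_tail K Y W.+1); split.
- exact: bigcapT_measurable.
- apply: (measure_bigcap_eq0 (C := 17 + 8 * cK R)) => // W.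
  exact: bad_tail_bound.
- move=> w /= not_stab W _; apply: contra_notP not_stab.
  exact: stabilizes_outside_bad_tail.
Qed.
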